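(* Let $M,N$ be finitary matroids on $E$, $b=(B_M,B_N)$ with $B_M$ a base of $M$ and $B_N$ a base of $N$, let $P$ be a finite directed path without shortcuts in $D(b)$, let $(B_M',B_N'):=b\circ P$, and let $U$ be the union of the escorting circuits of the arcs of $P$. Then $D_M(B_M')[E\setminus U]=D_M(B_M)[E\setminus U]$ and $D_N(B_N')[E\setminus U]=D_N(B_N)[E\setminus U]$.
   Context: For a base $B$ of a matroid $M$ on $E$, $D_M(B)$ is the digraph on $E$ with $ef\in D_M(B)$ iff $e\in E\setminus B$ and $f\in C_M(e,B)\setminus\{e\}$ ($C_M(e,B)$ the fundamental circuit of $e$ on $B$). $D^{-1}$ reverses all arcs; $D(b):=D_M(B_M)\cup D_N^{-1}(B_N)$. Escorting circuits of an arc $ef\in D(b)$: $C_M(e,B_M)$ if $ef\in D_M(B_M)$, and $C_N(f,B_N)$ if $ef\in D_N^{-1}(B_N)$. A shortcut of a path $P$ is an arc $ef\in D(b)$ with $e,f\in E(P)$, $f$ later than $e$ on $P$, $ef\notin A(P)$. $b\circ P=(B_M',B_N')$ where $B_M'$ is obtained from $B_M$ by adding tails and deleting heads of arcs in $A(P)\cap D_M(B_M)$, and $B_N'$ from $B_N$ by adding heads and deleting tails of arcs in $A(P)\cap D_N^{-1}(B_N)$ (these are bases). $D[X]$ denotes the subdigraph induced on $X$. *)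

From Stdlib Require Import List Arith.
Import ListNotations.

Definition subset {E : Type} (X Y : E -> Prop) : Prop := forall x, X x -> Y x.

(* Finitary matroid given by its independent sets (independence space of
   finite character): empty set independent, subset-closed, augmentation for
   finite independent sets, and a set is independent iff all its finite
   subsets are. *)
Record finitary_matroid (E : Type) := FinitaryMatroid {
  indep : (E -> Prop) -> Prop;
  indep_empty : indep (fun _ => False);
  indep_subset : forall X Y, indep Y -> subset X Y -> indep X;
  indep_aug : forall lI lJ : list E, NoDup lI -> NoDup lJ ->
    indep (fun x => In x lI) -> indep (fun x => In x lJ) ->
    length lI < length lJ ->
    exists x, In x lJ /\ ~ In x lI /\ indep (fun y => In y lI \/ y = x);
  indep_finitary : forall X : E -> Prop,
    (forall l : list E, (forall x, In x l -> X x) -> indep (fun x => In x l)) ->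
    indep X
}.
Arguments indep {E}.

Definition is_base {E} (M : finitary_matroid E) (B : E -> Prop) : Prop :=
  indep M B /\ forall X, indep M X -> subset B X -> subset X B.

Definition is_circuit {E} (M : finitary_matroid E) (C : E -> Prop) : Prop :=
  ~ indep M C /\
  forall X, subset X C -> (exists x, C x /\ ~ X x) -> indep M X.

(* fundamental circuit C_M(e,B): the (unique, for B a base and e not in B)
   circuit contained in B + e; written as the union of circuits in B + e. *)
Definition fund_circuit {E} (M : finitary_matroid E) (e : E) (B : E -> Prop)
  : E -> Prop :=
  fun f => exists C, is_circuit M C /\ subset C (fun x => B x \/ x = e) /\ C f.

Definition DM {E} (M : finitary_matroid E) (B : E -> Prop) (e f : E) : Prop :=
  ~ B e /\ fund_circuit M e B f /\ f <> e.

Definition Dinv {E} (D : E -> E -> Prop) (e f : E) : Prop := D f e.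

Definition Db {E} (M N : finitary_matroid E) (BM BN : E -> Prop) (e f : E)
  : Prop := DM M BM e f \/ Dinv (DM N BN) e f.

Fixpoint path_arcs {E} (l : list E) : list (E * E) :=
  match l with
  | x :: ((y :: _) as t) => (x, y) :: path_arcs t
  | _ => []
  end.

Definition is_dipath {E} (D : E -> E -> Prop) (P : list E) : Prop :=
  NoDup P /\ forall e f, In (e, f) (path_arcs P) -> D e f.

Definition is_shortcut {E} (D : E -> E -> Prop) (P : list E) (e f : E) : Prop :=
  D e f /\ (exists l1 l2 l3, P = l1 ++ e :: l2 ++ f :: l3) /\
  ~ In (e, f) (path_arcs P).

Definition no_shortcuts {E} (D : E -> E -> Prop) (P : list E) : Prop :=
  forall e f, ~ is_shortcut D P e f.

Definition compose_M {E} (M : finitary_matroid E) (BM : E -> Prop) (P : list E)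
  : E -> Prop :=
  fun x =>
    (BM x \/ exists f, In (x, f) (path_arcs P) /\ DM M BM x f) /\
    ~ (exists e, In (e, x) (path_arcs P) /\ DM M BM e x).

Definition compose_N {E} (N : finitary_matroid E) (BN : E -> Prop) (P : list E)
  : E -> Prop :=
  fun x =>
    (BN x \/ exists e, In (e, x) (path_arcs P) /\ Dinv (DM N BN) e x) /\
    ~ (exists f, In (x, f) (path_arcs P) /\ Dinv (DM N BN) x f).

Definition escort {E} (M N : finitary_matroid E) (BM BN : E -> Prop) (e f : E)
  : E -> Prop :=
  fun x => (DM M BM e f /\ fund_circuit M e BM x) \/
           (Dinv (DM N BN) e f /\ fund_circuit N f BN x).

Definition escort_union {E} (M N : finitary_matroid E) (BM BN : E -> Prop)
  (P : list E) : E -> Prop :=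
  fun x => exists e f, In (e, f) (path_arcs P) /\ escort M N BM BN e f x.

(* Along a path without shortcuts, b o P arises from b by exchanging along the arcs of P
   one at a time, from the last arc backwards.  Exchanging along an arc x y of D_M(B)
   gives the base B - y + x and changes no arc e f with e, f outside C_M(x,B): for such
   e f the exchanges of x for y and of e for f commute, and C_M(x,B) stays the
   fundamental circuit of x.  Since P has no shortcuts, the exchanges along the arcs
   after a b never remove an element of C_M(a,B) - a, so the exchange along a b is
   still an exchange along an arc with the same circuit C_M(a,B).  The N-side is the
   M-side for the reversed path. *)

From Stdlib Require Import List Arith Lia Classical.
From Stdlib Require Import FunctionalExtensionality PropExtensionality.
Import ListNotations.

Arguments indep_subset {E} f {X} Y.

Lemma pred_ext {A : Type} (X Y : A -> Prop) : (forall z, X z <-> Y z) -> X = Y.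
Proof.
  intros H. apply functional_extensionality. intros z.
  apply propositional_extensionality, H.
Qed.

Lemma exists_nodup_restrict {A : Type} (l : list A) (P : A -> Prop) :
  exists l', NoDup l' /\ forall x, In x l' <-> In x l /\ P x.
Proof.
  induction l as [|a l [l' [Hn Hl']]].
  - exists []. split; [constructor|]. simpl; tauto.
  - destruct (classic (P a /\ ~ In a l')) as [[Ha Hal']|Ha].
    + exists (a :: l'). split; [constructor; auto|].
      intros x. simpl. rewrite Hl'. split; [intros [<-|Hx]|intros [[<-|Hx] Hx']]; tauto.
    + exists l'. split; auto. intros x. simpl. rewrite Hl'. split; [tauto|].
      intros [[<-|Hx] Hx']; [|tauto].
      apply NNPP. intros Hal. apply Ha. split; auto. rewrite Hl'. tauto.
Qed.

(** * Paths *)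

Lemma in_path_arcs_iff {A : Type} (P : list A) a w :
  In (a, w) (path_arcs P) <-> exists k1 k2, P = k1 ++ a :: w :: k2.
Proof.
  induction P as [|x [|y t] IH].
  - simpl. split; [tauto|]. intros [[|] [k2 H]]; discriminate.
  - simpl. split; [tauto|]. intros [[|c [|d k1]] [k2 H]]; discriminate.
  - change (path_arcs (x :: y :: t)) with ((x, y) :: path_arcs (y :: t)).
    simpl In. rewrite IH. split.
    + intros [H|[k1 [k2 H]]].
      * injection H as <- <-. exists [], t. reflexivity.
      * exists (x :: k1), k2. rewrite H. reflexivity.
    + intros [[|c k1] [k2 H]]; simpl in H; injection H as -> H.
      * left. congruence.
      * right. exists k1, k2. exact H.
Qed.

Lemma in_path_arcs_in {A : Type} (P : list A) a w :
  In (a, w) (path_arcs P) -> In a P /\ In w P.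
Proof.
  intros H. apply in_path_arcs_iff in H as [k1 [k2 ->]].
  split; apply in_or_app; simpl; auto.
Qed.

Lemma in_path_arcs_rev {A : Type} (P : list A) a w :
  In (a, w) (path_arcs (rev P)) <-> In (w, a) (path_arcs P).
Proof.
  rewrite !in_path_arcs_iff. split; intros [k1 [k2 H]]; exists (rev k2), (rev k1).
  - rewrite <- (rev_involutive P), H, rev_app_distr. simpl.
    rewrite <- !app_assoc. reflexivity.
  - rewrite H, rev_app_distr. simpl. rewrite <- !app_assoc. reflexivity.
Qed.

Lemma not_in_path_arcs_head {A : Type} (x : A) t e :
  NoDup (x :: t) -> ~ In (e, x) (path_arcs (x :: t)).
Proof.
  intros Hn H. apply in_path_arcs_iff in H as [[|c k1] [k2 H]];
    simpl in H; injection H as _ H; apply NoDup_cons_iff in Hn as [Hx _]; apply Hx.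
  - rewrite H. left; reflexivity.
  - rewrite H. apply in_or_app. simpl; auto.
Qed.

Lemma NoDup_split_unique {A : Type} (l1 k1 r1 r2 : list A) a :
  NoDup (l1 ++ a :: r1) -> l1 ++ a :: r1 = k1 ++ a :: r2 -> r1 = r2.
Proof.
  revert k1. induction l1 as [|c l1 IH]; intros [|d k1] Hn H; simpl in *.
  - injection H as H. exact H.
  - injection H as -> H. apply NoDup_cons_iff in Hn as [Ha _].
    exfalso. apply Ha. rewrite H. apply in_or_app. simpl; auto.
  - injection H as -> H. apply NoDup_cons_iff in Hn as [Ha _].
    exfalso. apply Ha. apply in_or_app. simpl; auto.
  - injection H as -> H. apply NoDup_cons_iff in Hn as [_ Hn]. exact (IH k1 Hn H).
Qed.

Lemma not_in_path_arcs_gap {A : Type} (l1 m l3 : list A) a w :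
  NoDup (l1 ++ a :: m ++ w :: l3) -> m <> [] ->
  ~ In (a, w) (path_arcs (l1 ++ a :: m ++ w :: l3)).
Proof.
  intros Hn Hm H. apply in_path_arcs_iff in H as [k1 [k2 H]].
  apply NoDup_split_unique in H; auto.
  destruct m as [|c m]; [auto|]. injection H as -> _.
  apply NoDup_app_remove_l, NoDup_cons_iff in Hn as [_ Hn].
  apply NoDup_cons_iff in Hn as [Hw _]. apply Hw, in_or_app. simpl. auto.
Qed.

Lemma no_shortcuts_mono {A : Type} (D D' : A -> A -> Prop) P :
  (forall e f, D' e f -> D e f) -> no_shortcuts D P -> no_shortcuts D' P.
Proof. intros HD Hsc e f [Hef Hpos]. exact (Hsc e f (conj (HD e f Hef) Hpos)). Qed.

Lemma no_shortcuts_rev {A : Type} (D : A -> A -> Prop) P :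
  no_shortcuts D P -> no_shortcuts (Dinv D) (rev P).
Proof.
  intros Hsc e f [Hfe [[l1 [l2 [l3 HP]]] Harc]]. apply (Hsc f e). split; [exact Hfe|split].
  - exists (rev l3), (rev l2), (rev l1).
    rewrite <- (rev_involutive P), HP, !rev_app_distr. simpl.
    rewrite rev_app_distr. simpl. rewrite <- !app_assoc. reflexivity.
  - rewrite <- in_path_arcs_rev. exact Harc.
Qed.

Lemma no_shortcuts_tail {A : Type} (D : A -> A -> Prop) a t :
  NoDup (a :: t) -> no_shortcuts D (a :: t) -> no_shortcuts D t.
Proof.
  intros Hn Hsc e f [Hef [[l1 [l2 [l3 Ht]]] Harc]]. apply (Hsc e f).
  split; [exact Hef|split].
  - exists (a :: l1), l2, l3. rewrite Ht. reflexivity.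
  - rewrite in_path_arcs_iff. intros [[|c k1] [k2 H]]; injection H as <- H.
    + apply NoDup_cons_iff in Hn as [Ha _]. apply Ha. rewrite Ht.
      apply in_or_app. simpl. auto.
    + apply Harc, in_path_arcs_iff. exists k1, k2. exact H.
Qed.

Lemma no_shortcut_from_head {A : Type} (D : A -> A -> Prop) a b t z :
  NoDup (a :: b :: t) -> no_shortcuts D (a :: b :: t) -> In z t -> ~ D a z.
Proof.
  intros Hn Hsc Hz Haz. apply in_split in Hz as [l2 [l3 ->]].
  apply (Hsc a z). split; [exact Haz|split].
  - exists [], (b :: l2), l3. reflexivity.
  - apply (not_in_path_arcs_gap [] (b :: l2)); [exact Hn|discriminate].
Qed.

Definition exch {A : Type} (B : A -> Prop) (y x : A) : A -> Prop :=
  fun z => (B z /\ z <> y) \/ z = x.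

Lemma exch_other {A : Type} (B : A -> Prop) y x z :
  z <> y -> z <> x -> exch B y x z <-> B z.
Proof. unfold exch. intuition congruence. Qed.

Lemma exch_comm {A : Type} (B : A -> Prop) y x f e :
  e <> y -> x <> f -> exch (exch B f e) y x = exch (exch B y x) f e.
Proof.
  intros Hey Hxf. apply pred_ext. intros z. unfold exch.
  destruct (classic (z = x)), (classic (z = e)); subst; intuition congruence.
Qed.

Lemma exch_inv {A : Type} (B : A -> Prop) y x :
  ~ B x -> B y -> exch (exch B y x) x y = B.
Proof.
  intros Hx Hy. apply pred_ext. intros z. unfold exch.
  destruct (classic (z = x)), (classic (z = y)); subst; intuition congruence.
Qed.

(** * Circuits and exchanges *)

Section Matroid.
Variables (E : Type) (M : finitary_matroid E).

Lemma dep_finite (X : E -> Prop) : ~ indep M X ->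
  exists L, subset (fun x => In x L) X /\ ~ indep M (fun x => In x L).
Proof.
  intros HX. apply NNPP. intros H. apply HX, indep_finitary. intros L HL.
  apply NNPP. intros Hd. apply H. exists L. split; assumption.
Qed.

Lemma circuit_finite (C : E -> Prop) : is_circuit M C -> exists L, C = (fun x => In x L).
Proof.
  intros [Hd Hmin]. destruct (dep_finite C Hd) as [L [HL HLd]].
  exists L. apply pred_ext. intros x. split; [|apply HL].
  intros Hx. apply NNPP. intros Hx'. apply HLd, Hmin; [exact HL|]. exists x; auto.
Qed.

Lemma dep_list_has_circuit (L : list E) : ~ indep M (fun x => In x L) ->
  exists C, is_circuit M C /\ subset C (fun x => In x L).
Proof.
  remember (length L) as n eqn:Hn. revert L Hn.
  induction n as [n IH] using lt_wf_ind. intros L -> HL.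
  destruct (classic (exists x, In x L /\ ~ indep M (fun z => In z L /\ z <> x)))
    as [[x [Hx Hdx]]|Hall].
  - destruct (exists_nodup_restrict L (fun z => z <> x)) as [L' [HL'n HL']].
    assert (Hlen : length (x :: L') <= length L).
    { apply NoDup_incl_length.
      - constructor; [rewrite HL'; tauto|exact HL'n].
      - intros z [<-|Hz]; [exact Hx|apply HL', Hz]. }
    destruct (IH (length L') ltac:(simpl in Hlen; lia) L' eq_refl) as [C [HC HCL']].
    { replace (fun z => In z L') with (fun z => In z L /\ z <> x)
        by (apply pred_ext; firstorder). exact Hdx. }
    exists C. split; [exact HC|]. intros z Hz. apply HL', HCL', Hz.
  - exists (fun x => In x L). split; [split|intros z; auto].
    + exact HL.
    + intros X HX [x [Hx HXx]]. apply (indep_subset M (fun z => In z L /\ z <> x)).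
      * apply NNPP. intros Hd. apply Hall. eauto.
      * intros z Hz. split; [exact (HX z Hz)|]. intros ->. contradiction.
Qed.

Lemma dep_has_circuit (X : E -> Prop) : ~ indep M X ->
  exists C, is_circuit M C /\ subset C X.
Proof.
  intros HX. destruct (dep_finite X HX) as [L [HLX HL]].
  destruct (dep_list_has_circuit L HL) as [C [HC HCL]].
  exists C. split; [exact HC|]. intros z Hz. apply HLX, HCL, Hz.
Qed.

Lemma indep_augment_to (I J : list E) : NoDup I -> NoDup J ->
  indep M (fun x => In x I) -> indep M (fun x => In x J) -> length I <= length J ->
  exists K, NoDup K /\ indep M (fun x => In x K) /\ incl I K /\ incl K (I ++ J) /\
    length K = length J.
Proof.
  remember (length J - length I) as n eqn:Hn. revert I Hn.
  induction n as [|n IH]; intros I Hn HI HJ hI hJ Hle.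
  - exists I. repeat split; auto; [apply incl_refl|apply incl_appl, incl_refl|lia].
  - destruct (indep_aug E M I J HI HJ hI hJ) as [x [HxJ [HxI hIx]]]; [lia|].
    destruct (IH (x :: I)) as [K [HK [hK [HIK [HKIJ HKlen]]]]];
      [simpl; lia|constructor; auto|exact HJ| |exact hJ|simpl; lia|].
    + replace (fun y => In y (x :: I)) with (fun y => In y I \/ y = x)
        by (apply pred_ext; intros z; simpl; split; intros [H|H]; auto). exact hIx.
    + exists K. repeat split; auto.
      * intros y Hy. apply HIK. right. exact Hy.
      * intros y Hy. apply HKIJ in Hy as [<-|Hy]; apply in_or_app; [auto|].
        apply in_app_or in Hy. tauto.
Qed.

(* Augmenting I from J can never add f, so it fills up all of T. *)
Lemma indep_of_blocked_augment (T I J : list E) f :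
  NoDup I -> NoDup J -> incl I (f :: T) -> incl J (f :: T) -> length T <= length J ->
  indep M (fun x => In x I) -> indep M (fun x => In x J) ->
  ~ indep M (fun x => In x I \/ x = f) -> indep M (fun x => In x T).
Proof.
  intros HI HJ HIT HJT Hlen hI hJ Hdep.
  assert (HfI : ~ In f I).
  { intros HfI. apply Hdep, (indep_subset M _ hI). intros x [Hx| ->]; auto. }
  assert (HIJ : length I <= length J).
  { enough (length I <= length T) by lia. apply NoDup_incl_length; [exact HI|].
    intros x Hx. destruct (HIT x Hx) as [<-|H]; [contradiction|exact H]. }
  destruct (indep_augment_to I J HI HJ hI hJ HIJ) as [K [HK [hK [HIK [HKIJ HKlen]]]]].
  assert (HKT : incl K T).
  { intros x Hx. destruct (classic (x = f)) as [->|Hxf].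
    - exfalso. apply Hdep, (indep_subset M _ hK). intros y [Hy| ->]; auto.
    - apply HKIJ, in_app_or in Hx as [Hx|Hx];
        [destruct (HIT x Hx)|destruct (HJT x Hx)]; congruence + assumption. }
  apply (indep_subset M _ hK). apply (NoDup_length_incl HK); [lia|exact HKT].
Qed.


Lemma indep_exch_of_circuit (B C : E -> Prop) e f :
  indep M B -> is_circuit M C -> subset C (fun x => B x \/ x = e) -> C f -> f <> e ->
  indep M (exch B f e).
Proof.
  intros hB HC HCB Hf Hfe. apply NNPP. intros Hd.
  destruct (dep_finite _ Hd) as [L [HL HLd]].
  destruct (circuit_finite C HC) as [LC ->].
  (* Inside L + C take T = (L + C) - f, I = C - f and J = (L + C) - e, a subset of B. *)
  destruct (exists_nodup_restrict (L ++ LC) (fun x => x <> f)) as [T [HT HTi]].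
  destruct (exists_nodup_restrict T (fun x => In x LC)) as [I [HI HIi]].
  destruct (exists_nodup_restrict (f :: T) (fun x => x <> e)) as [J [HJ HJi]].
  assert (HfT : ~ In f T) by (rewrite HTi; tauto).
  apply HLd, (indep_subset M (fun x => In x T)).
  - apply (indep_of_blocked_augment T I J f); auto.
    + intros x Hx. right. apply HIi, Hx.
    + intros x Hx. apply HJi, Hx.
    + enough (length (f :: T) <= length (e :: J)) by (simpl in *; lia).
      apply NoDup_incl_length; [constructor; auto|].
      intros x Hx. destruct (classic (x = e)) as [->|Hxe]; [left|right]; auto.
      apply HJi. auto.
    + apply (proj2 HC).
      * intros x Hx. apply HIi, Hx.
      * exists f. split; [exact Hf|]. rewrite HIi. tauto.
    + apply (indep_subset M B hB). intros x Hx.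
      apply HJi in Hx as [[<-|Hx] Hxe].
      * destruct (HCB f Hf); tauto.
      * apply HTi, proj1, in_app_or in Hx as [Hx|Hx];
          [destruct (HL x Hx) as [[]|]|destruct (HCB x Hx)]; tauto.
    + intros hIf. apply (proj1 HC), (indep_subset M _ hIf). intros x Hx.
      destruct (classic (x = f)) as [->|Hxf]; [right; reflexivity|left].
      apply HIi. split; [apply HTi; split; [apply in_or_app; auto|]|]; assumption.
  - intros x Hx. apply HTi. split; [apply in_or_app; auto|]. intros ->.
    destruct (HL f Hx) as [[_ Hff]|Hfe']; auto.
Qed.

Lemma circuit_has_tail (B C : E -> Prop) a :
  indep M B -> is_circuit M C -> subset C (fun x => B x \/ x = a) -> C a.
Proof.
  intros hB [Hd _] HCB. apply NNPP. intros Ha. apply Hd, (indep_subset M B hB).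
  intros z Hz. destruct (HCB z Hz) as [H| ->]; [exact H|contradiction].
Qed.

Lemma circuit_unique (B C1 C2 : E -> Prop) a : indep M B ->
  is_circuit M C1 -> subset C1 (fun x => B x \/ x = a) ->
  is_circuit M C2 -> subset C2 (fun x => B x \/ x = a) -> C1 = C2.
Proof.
  intros hB.
  assert (Hsub : forall C C', is_circuit M C -> subset C (fun x => B x \/ x = a) ->
    is_circuit M C' -> subset C' (fun x => B x \/ x = a) -> subset C C').
  { intros C C' HC HCB HC' HC'B z Hz. apply NNPP. intros Hz'.
    destruct (classic (z = a)) as [->|Hza].
    { apply Hz'. apply (circuit_has_tail B); assumption. }
    apply (proj1 HC'), (indep_subset M (exch B z a)).
    - apply (indep_exch_of_circuit B C); assumption.
    - intros w Hw. destruct (HC'B w Hw) as [HBw| ->]; [left|right; reflexivity].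
      split; [exact HBw|]. intros ->. contradiction. }
  intros HC1 HC1B HC2 HC2B. apply pred_ext. intros z.
  split; [apply (Hsub C1 C2)|apply (Hsub C2 C1)]; assumption.
Qed.

Lemma fund_circuit_eq (B C : E -> Prop) a : indep M B ->
  is_circuit M C -> subset C (fun x => B x \/ x = a) -> fund_circuit M a B = C.
Proof.
  intros hB HC HCB. apply pred_ext. intros z. split.
  - intros [C' [HC' [HC'B Hz]]]. rewrite (circuit_unique B C C' a); assumption.
  - intros Hz. exists C. auto.
Qed.

Lemma fund_circuit_of_exch (B : E -> Prop) e f :
  ~ indep M (fun x => B x \/ x = e) -> indep M (exch B f e) -> fund_circuit M e B f.
Proof.
  intros Hd Hi. destruct (dep_has_circuit _ Hd) as [C [HC HCB]].
  exists C. split; [exact HC|split; [exact HCB|]]. apply NNPP. intros Hf.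
  apply (proj1 HC), (indep_subset M _ Hi). intros z Hz.
  destruct (HCB z Hz) as [HBz| ->]; [left|right; reflexivity].
  split; [exact HBz|]. intros ->. contradiction.
Qed.

Lemma base_add_dep (B : E -> Prop) e : is_base M B -> ~ B e ->
  ~ indep M (fun x => B x \/ x = e).
Proof.
  intros [_ Hmax] He Hi. apply He, (Hmax _ Hi).
  - intros z Hz. left. exact Hz.
  - right. reflexivity.
Qed.

Lemma DM_iff_exch (B : E -> Prop) e f : is_base M B ->
  DM M B e f <-> ~ B e /\ B f /\ f <> e /\ indep M (exch B f e).
Proof.
  intros HB. split.
  - intros [He [[C [HC [HCB Hf]]] Hfe]]. repeat split; [exact He| |exact Hfe|].
    + destruct (HCB f Hf); [assumption|contradiction].
    + apply (indep_exch_of_circuit B C); [apply HB|..]; assumption.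
  - intros [He [_ [Hfe Hi]]]. repeat split; [exact He| |exact Hfe].
    apply fund_circuit_of_exch; [apply base_add_dep|]; assumption.
Qed.

(* Rank count: both B + x and B + z are dependent, and augmenting a finite part of B
   from B - y + x + z would have to add x or z. *)
Lemma base_exch_add_dep (B : E -> Prop) y x z : is_base M B -> ~ B x -> ~ B z -> x <> z ->
  ~ indep M (fun w => exch B y x w \/ w = z).
Proof.
  intros HB Hx Hz Hxz Hi.
  destruct (dep_finite _ (base_add_dep B x HB Hx)) as [L1 [HL1 HL1d]].
  destruct (dep_finite _ (base_add_dep B z HB Hz)) as [L2 [HL2 HL2d]].
  destruct (exists_nodup_restrict (L1 ++ L2) B) as [I [HI HIi]].
  destruct (exists_nodup_restrict (x :: z :: I) (fun w => w <> y)) as [K [HK HKi]].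
  assert (hI : indep M (fun w => In w I)).
  { apply (indep_subset M B (proj1 HB)). intros w Hw. apply HIi, Hw. }
  assert (hK : indep M (fun w => In w K)).
  { apply (indep_subset M _ Hi). intros w Hw. unfold exch.
    apply HKi in Hw as [[<-|[<-|Hw]] Hwy]; [left; right| right |left; left]; auto.
    split; [apply HIi, Hw|exact Hwy]. }
  assert (Hlen : length I < length K).
  { enough (length (x :: z :: I) <= length (y :: K)) by (simpl in *; lia).
    apply NoDup_incl_length.
    - constructor; [|constructor; [|exact HI]].
      + intros [Hzx|HxI]; [congruence|apply HIi in HxI; tauto].
      + intros HzI. apply HIi in HzI. tauto.
    - intros w Hw. destruct (classic (w = y)) as [->|Hwy]; [left|right]; auto.
      apply HKi. auto. }
  destruct (indep_aug E M I K HI HK hI hK Hlen) as [w [HwK [HwI hIw]]].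
  apply HKi in HwK as [[<-|[<-|HwI']] _]; [apply HL1d|apply HL2d|contradiction].
  - apply (indep_subset M _ hIw). intros v Hv.
    destruct (HL1 v Hv) as [HBv| ->]; [left|right; reflexivity].
    apply HIi. split; [apply in_or_app; left|]; assumption.
  - apply (indep_subset M _ hIw). intros v Hv.
    destruct (HL2 v Hv) as [HBv| ->]; [left|right; reflexivity].
    apply HIi. split; [apply in_or_app; right|]; assumption.
Qed.

Lemma base_exch (B : E -> Prop) x y : is_base M B -> DM M B x y -> is_base M (exch B y x).
Proof.
  intros HB Hxy. apply (DM_iff_exch B x y HB) in Hxy as [Hx [_ [_ Hi]]].
  split; [exact Hi|]. intros X HX HXB z Hz. apply NNPP. intros Hnz.
  destruct (classic (z = y)) as [->|Hzy].
  - apply (base_add_dep B x HB Hx), (indep_subset M _ HX). intros w [Hw| ->].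
    + destruct (classic (w = y)) as [->|Hwy]; [exact Hz|apply HXB; left; auto].
    + apply HXB. right. reflexivity.
  - apply (base_exch_add_dep B y x z HB Hx);
      [intros HBz; apply Hnz; left; auto|intros ->; apply Hnz; right; reflexivity|].
    apply (indep_subset M _ HX). intros w [Hw| ->]; [apply HXB, Hw|exact Hz].
Qed.

(* Exchanging e for f first leaves x y an arc with the same circuit, and the two
   exchanges commute. *)
Lemma DM_exch_of_DM (B : E -> Prop) x y e f : is_base M B -> DM M B x y ->
  ~ fund_circuit M x B e -> ~ fund_circuit M x B f -> DM M B e f ->
  DM M (exch B y x) e f.
Proof.
  intros HB Hxy He Hf Hef.
  pose proof Hxy as [Hx [[C [HC [HCB Hy]]] Hyx]].
  rewrite (fund_circuit_eq B C x (proj1 HB) HC HCB) in He, Hf.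
  assert (HCx : C x) by (apply (circuit_has_tail B); [apply HB|..]; assumption).
  assert (Hex : e <> x) by (intros ->; contradiction).
  assert (Hey : e <> y) by (intros ->; contradiction).
  assert (Hfx : f <> x) by (intros ->; contradiction).
  assert (Hfy : f <> y) by (intros ->; contradiction).
  pose proof (base_exch B e f HB Hef) as HB2.
  apply (DM_iff_exch B e f HB) in Hef as [HBe [HBf [Hfe _]]].
  assert (Hxy2 : DM M (exch B f e) x y).
  { split; [|split; [exists C; split; [exact HC|split; [|exact Hy]]|exact Hyx]].
    - rewrite exch_other; auto.
    - intros z Hz. destruct (HCB z Hz) as [HBz| ->]; [left; left|right; reflexivity].
      split; [exact HBz|]. intros ->. contradiction. }
  apply (DM_iff_exch _ x y HB2) in Hxy2 as [_ [_ [_ Hi]]].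
  rewrite exch_comm in Hi by auto.
  apply (DM_iff_exch _ e f (base_exch B x y HB Hxy)).
  rewrite !exch_other by auto. auto.
Qed.

Lemma DM_exch_iff (B : E -> Prop) x y e f : is_base M B -> DM M B x y ->
  ~ fund_circuit M x B e -> ~ fund_circuit M x B f ->
  DM M (exch B y x) e f <-> DM M B e f.
Proof.
  intros HB Hxy He Hf. split; [|apply DM_exch_of_DM; assumption].
  pose proof (base_exch B x y HB Hxy) as HB1.
  pose proof Hxy as [Hx [[C [HC [HCB Hy]]] Hyx]].
  assert (HCx : C x) by (apply (circuit_has_tail B); [apply HB|..]; assumption).
  assert (HBy : B y) by (destruct (HCB y Hy); [assumption|contradiction]).
  assert (HCB1 : subset C (fun z => exch B y x z \/ z = y)).
  { intros z Hz. destruct (classic (z = y)) as [->|Hzy]; [right; reflexivity|left].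
    destruct (HCB z Hz) as [HBz| ->]; [left; split|right]; auto. }
  assert (Hyx1 : DM M (exch B y x) y x).
  { split; [intros [[_ H]|H]; auto|split; [exists C; auto|congruence]]. }
  rewrite (fund_circuit_eq B C x (proj1 HB) HC HCB) in He, Hf.
  rewrite <- (fund_circuit_eq _ C y (proj1 HB1) HC HCB1) in He, Hf.
  intros Hef. rewrite <- (exch_inv B y x Hx HBy). apply DM_exch_of_DM; assumption.
Qed.

(* C_M(a,B) is also the fundamental circuit of a in B', so a b is an arc of D_M(B'). *)
Lemma base_exch_transfer (B B' : E -> Prop) a b : is_base M B -> is_base M B' ->
  DM M B a b -> ~ B' a -> (forall z, fund_circuit M a B z -> z <> a -> B' z) ->
  is_base M (exch B' b a) /\
  forall e f, ~ fund_circuit M a B e -> ~ fund_circuit M a B f ->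
    (DM M (exch B' b a) e f <-> DM M B' e f).
Proof.
  intros HB HB' [Ha [[C [HC [HCB Hb]]] Hba]] Ha' Hkeep.
  rewrite (fund_circuit_eq B C a (proj1 HB) HC HCB) in Hkeep |- *.
  assert (HCB' : subset C (fun z => B' z \/ z = a)).
  { intros z Hz. destruct (classic (z = a)) as [->|Hza]; [right|left; apply Hkeep]; auto. }
  assert (Hab' : DM M B' a b) by (split; [exact Ha'|split; [exists C; auto|exact Hba]]).
  rewrite <- (fund_circuit_eq B' C a (proj1 HB') HC HCB').
  split; [apply base_exch; assumption|]. intros e f He Hf. apply DM_exch_iff; assumption.
Qed.

(** * Composition along a path *)

Lemma compose_M_short (B : E -> Prop) t : path_arcs t = [] -> compose_M M B t = B.
Proof.
  intros Ht. apply pred_ext. intros z. unfold compose_M. rewrite Ht. simpl.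
  split; [intros [[H|[f [[] _]]] _]; exact H|intros H; split; [left; exact H|]].
  intros [e [[] _]].
Qed.

Lemma compose_M_off_path (B : E -> Prop) t w : ~ In w t -> compose_M M B t w <-> B w.
Proof.
  intros Hw. unfold compose_M. split.
  - intros [[H|[f [Hf _]]] _]; [exact H|]. apply in_path_arcs_in in Hf. tauto.
  - intros H. split; [left; exact H|].
    intros [e [He _]]. apply in_path_arcs_in in He. tauto.
Qed.

Lemma compose_M_keep (B : E -> Prop) t w :
  B w -> (forall e, ~ In (e, w) (path_arcs t)) -> compose_M M B t w.
Proof. intros Hw Ht. split; [left; exact Hw|]. intros [e [He _]]. exact (Ht e He). Qed.

Lemma compose_M_cons_skip (B : E -> Prop) a b t : ~ DM M B a b ->
  compose_M M B (a :: b :: t) = compose_M M B (b :: t).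
Proof.
  intros Hab. apply pred_ext. intros z. unfold compose_M.
  change (path_arcs (a :: b :: t)) with ((a, b) :: path_arcs (b :: t)). cbn [In].
  split; intros [Hin Hout]; split.
  - destruct Hin as [H|[f [[Hf|Hf] Hzf]]]; [left; exact H| |right; eauto].
    injection Hf as -> ->. contradiction.
  - intros [e He]. apply Hout. exists e. tauto.
  - destruct Hin as [H|[f Hf]]; [left; exact H|right; exists f; tauto].
  - intros [e [[He|He] Hez]]; [injection He as -> ->; contradiction|].
    apply Hout. exists e. auto.
Qed.

Lemma compose_M_cons_arc (B : E -> Prop) a b t : ~ In a (b :: t) -> DM M B a b ->
  compose_M M B (a :: b :: t) = exch (compose_M M B (b :: t)) b a.
Proof.
  intros Ha Hab. apply pred_ext. intros z. unfold compose_M, exch.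
  change (path_arcs (a :: b :: t)) with ((a, b) :: path_arcs (b :: t)). cbn [In].
  destruct (classic (z = a)) as [->|Hza].
  - split; [right; reflexivity|intros _]. split; [right; exists b; auto|].
    intros [e [[He|He] _]].
    + injection He as _ Hba. apply Ha. left. exact Hba.
    + apply in_path_arcs_in in He. tauto.
  - split.
    + intros [Hin Hout]. left. split; [split|].
      * destruct Hin as [H|[f [[Hf|Hf] Hzf]]]; [left; exact H| |right; eauto].
        injection Hf as -> ->. contradiction.
      * intros [e He]. apply Hout. exists e. tauto.
      * intros ->. apply Hout. exists a. auto.
    + intros [[[Hin Hout] Hzb]|Hza']; [|contradiction]. split.
      * destruct Hin as [H|[f Hf]]; [left; exact H|right; exists f; tauto].
      * intros [e [[He|He] Hez]]; [injection He as _ ->; contradiction|].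
        apply Hout. exists e. auto.
Qed.

Definition fund_circuit_union (B : E -> Prop) (P : list E) : E -> Prop :=
  fun z => exists a b, In (a, b) (path_arcs P) /\ DM M B a b /\ fund_circuit M a B z.

Lemma compose_M_agree (B : E -> Prop) P : is_base M B -> NoDup P ->
  no_shortcuts (DM M B) P ->
  is_base M (compose_M M B P) /\
  forall e f, ~ fund_circuit_union B P e -> ~ fund_circuit_union B P f ->
    (DM M (compose_M M B P) e f <-> DM M B e f).
Proof.
  intros HB. induction P as [|a [|b t] IH]; intros Hn Hsc;
    try (rewrite compose_M_short by reflexivity; split; [exact HB|tauto]).
  pose proof (proj1 (NoDup_cons_iff a _) Hn) as [Ha Hn'].
  destruct (IH Hn' (no_shortcuts_tail _ a _ Hn Hsc)) as [HB' Hagree].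
  assert (Houter : forall z, ~ fund_circuit_union B (a :: b :: t) z ->
    ~ fund_circuit_union B (b :: t) z /\ (DM M B a b -> ~ fund_circuit M a B z)).
  { intros z Hz. split.
    - intros [a0 [b0 [Harc H]]]. apply Hz. exists a0, b0. split; [right|]; assumption.
    - intros Hab H. apply Hz. exists a, b. split; [left|split]; auto. }
  destruct (classic (DM M B a b)) as [Hab|Hab].
  - rewrite compose_M_cons_arc by assumption.
    assert (Hkeep : forall z, fund_circuit M a B z -> z <> a -> compose_M M B (b :: t) z).
    { intros z Hz Hza. apply compose_M_keep.
      - destruct Hz as [C [_ [HCB HCz]]]. destruct (HCB z HCz); [assumption|contradiction].
      - intros e He. pose proof (in_path_arcs_in _ _ _ He) as [_ [<-|Hzt]].
        + exact (not_in_path_arcs_head _ _ _ Hn' He).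
        + apply (no_shortcut_from_head _ a b t z Hn Hsc Hzt).
          split; [apply Hab|split; assumption]. }
    assert (Ha' : ~ compose_M M B (b :: t) a)
      by (rewrite compose_M_off_path; [apply Hab|assumption]).
    destruct (base_exch_transfer B _ a b HB HB' Hab Ha' Hkeep) as [HB'' Hagree''].
    split; [exact HB''|]. intros e f He Hf.
    destruct (Houter e He) as [He' He''], (Houter f Hf) as [Hf' Hf''].
    rewrite Hagree''; auto.
  - rewrite compose_M_cons_skip by assumption. split; [exact HB'|].
    intros e f He Hf. apply Hagree; apply Houter; assumption.
Qed.

End Matroid.

Lemma compose_N_rev {E : Type} (N : finitary_matroid E) (B : E -> Prop) P :
  compose_N N B P = compose_M N B (rev P).
Proof.
  apply pred_ext. intros z. unfold compose_N, compose_M, Dinv.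
  setoid_rewrite in_path_arcs_rev. reflexivity.
Qed.

Lemma escort_union_split {E : Type} (M N : finitary_matroid E) BM BN P z :
  escort_union M N BM BN P z <->
  fund_circuit_union E M BM P z \/ fund_circuit_union E N BN (rev P) z.
Proof.
  unfold escort_union, escort, fund_circuit_union, Dinv.
  setoid_rewrite in_path_arcs_rev. firstorder.
Qed.

Theorem claim3p6 (E : Type) (M N : finitary_matroid E) (BM BN : E -> Prop)
  (hBM : is_base M BM) (hBN : is_base N BN) (P : list E)
  (hP : is_dipath (Db M N BM BN) P)
  (hsc : no_shortcuts (Db M N BM BN) P) :
  let U := escort_union M N BM BN P in
  (forall e f, ~ U e -> ~ U f ->
     (DM M (compose_M M BM P) e f <-> DM M BM e f)) /\
  (forall e f, ~ U e -> ~ U f ->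
     (DM N (compose_N N BN P) e f <-> DM N BN e f)).
Proof.
  intros U. destruct hP as [HnP _].
  assert (hscM : no_shortcuts (DM M BM) P).
  { apply (no_shortcuts_mono (Db M N BM BN)); [intros e f H; left|]; assumption. }
  assert (hscN : no_shortcuts (DM N BN) (rev P)).
  { apply (no_shortcuts_rev (Dinv (DM N BN))), (no_shortcuts_mono (Db M N BM BN));
      [intros e f H; right|]; assumption. }
  destruct (compose_M_agree E M BM P hBM HnP hscM) as [_ HaggM].
  destruct (compose_M_agree E N BN (rev P) hBN (NoDup_rev HnP) hscN) as [_ HaggN].
  split; intros e f He Hf.
  - apply HaggM; intros H; [apply He|apply Hf]; apply escort_union_split; left; exact H.
  - rewrite compose_N_rev.
    apply HaggN; intros H; [apply He|apply Hf]; apply escort_union_split; right; exact H.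
Qed.
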